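(* For every positive integer $m$, $$\zeta(m,1)=2^{\lfloor (m-1)/2\rfloor},\qquad \zeta(m,2)=3^{\lfloor (m-1)/2\rfloor},$$ $$\zeta(m,3)=\frac{(2+\sqrt2)^{\lfloor (m+1)/2\rfloor}+(2-\sqrt2)^{\lfloor (m+1)/2\rfloor}}{4},$$ $$\zeta(m,4)=\frac{\big(\tfrac{5+\sqrt5}{2}\big)^{\lfloor (m+1)/2\rfloor}+\big(\tfrac{5-\sqrt5}{2}\big)^{\lfloor (m+1)/2\rfloor}}{5},$$ $$\zeta(m,5)=\frac{(2+\sqrt3)^{\lfloor (m+1)/2\rfloor}+(2-\sqrt3)^{\lfloor (m+1)/2\rfloor}+2^{\lfloor (m+1)/2\rfloor}}{6}.$$
   Context: For positive integers $m$ and $\delta$, a $\delta$-deviation set of size $m$ is a finite sequence $(\alpha_1,\alpha_2,\dots,\alpha_\ell)$ of positive integers such that (i) $\sum_i\alpha_i=m$; (ii) $\big|\sum_i\alpha_{2i-1}-\sum_i\alpha_{2i}\big|\le 1$; (iii) $\big|\sum_{1\le i\le j}(-1)^{i-1}\alpha_i\big|\le\delta$ for every $j\ge 1$. $\zeta(m,\delta)$ denotes the number of $\delta$-deviation sets of size $m$. *)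

From HB Require Import structures.
From mathcomp Require Import all_boot all_order all_algebra.
Set Implicit Arguments. Unset Strict Implicit. Unset Printing Implicit Defensive.
Import Order.TTheory GRing.Theory Num.Theory.

(* A sequence (alpha_1,...,alpha_l) is represented by
   s : seq nat with alpha_i = nth 0 s (i-1) (0-based indices in Rocq). *)

Definition alt_psum (s : seq nat) (j : nat) : int :=
  (\sum_(i < j) (-1) ^+ i * (nth 0 s i)%:Z)%R.

(* sum_i alpha_{2i-1}  (1-based odd positions = 0-based even positions) *)
Definition odd_pos_sum (s : seq nat) : nat :=
  \sum_(i < size s | ~~ odd i) nth 0 s i.
Definition even_pos_sum (s : seq nat) : nat :=
  \sum_(i < size s | odd i) nth 0 s i.

Definition deviation_set (m delta : nat) (s : seq nat) : bool :=
  [&& all (fun a => 0 < a) s,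
      sumn s == m,
      (`|(odd_pos_sum s)%:Z - (even_pos_sum s)%:Z| <= 1)%R
    & all (fun j => `|alt_psum s j| <= delta%:Z)%R (iota 1 (size s))].
      (* (iii): for j >= size s the partial sum equals the j = size s one *)

Fixpoint seqs_of (k n : nat) : seq (seq nat) :=
  if k is k'.+1 then [seq a :: t | a <- iota 1 n, t <- seqs_of k' n] else [:: [::]].

(* every sequence of positive integers summing to m has length <= m and
   entries <= m, so it occurs (exactly once) in this list *)
Definition candidates (m : nat) : seq (seq nat) :=
  flatten [seq seqs_of k m | k <- iota 0 m.+1].

Definition zeta (m delta : nat) : nat :=
  count (deviation_set m delta) (candidates m).

From HB Require Import structures.
From mathcomp Require Import all_boot all_order all_algebra.
From mathcomp Require Import zify ring lra.
Import Order.TTheory GRing.Theory Num.Theory.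
Local Open Scope ring_scope.

(* Cut every part alpha_i into alpha_i unit steps of direction (-1)^(i-1).  The
   compositions of m become the +-1 walks of m steps from 0 whose first step is
   +1; the alternating partial sums are the positions reached at the ends of the
   parts, and since the walk is monotone inside a part, (iii) says that the whole
   walk stays in [-delta, delta] while (ii) says that it ends in [-1, 1].  Hence
   zeta(m, delta) counts the walks of m - 1 steps on the path {-delta, ..., delta}
   from 1 to {-1, 0, 1}.  Counting two steps at a time and using the reflection
   x |-> -x of the path, these numbers satisfy linear recurrences of order one
   (delta = 1, 2), two (delta = 3, 4) and three (delta = 5), whose characteristic
   roots give the closed forms. *)

Definition sgb (b : bool) : int := if b then 1 else -1.

Fixpoint dev_walk (d : nat) (x : int) (b : bool) (s : seq nat) : bool :=
  if s is a :: t then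
    [&& (0 < a)%N, `|x + sgb b * a%:Z| <= d%:Z & dev_walk d (x + sgb b * a%:Z) (~~ b) t]
  else `|x| <= 1.

Lemma alt_psum0 s : alt_psum s 0 = 0.
Proof. by rewrite /alt_psum big_ord0. Qed.

Lemma alt_psum_cons a t j : alt_psum (a :: t) j.+1 = a%:Z - alt_psum t j.
Proof.
rewrite /alt_psum big_ord_recl /= expr0 mul1r -sumrN; congr (_ + _).
by apply: eq_bigr => i _; rewrite /bump /= exprS mulN1r mulNr.
Qed.

Lemma dev_walkE d x b s :
  dev_walk d x b s = [&& all (fun a => 0 < a)%N s,
                         `|x + sgb b * alt_psum s (size s)| <= 1
                       & all (fun j => `|x + sgb b * alt_psum s j| <= d%:Z) (iota 1 (size s))].
Proof.
elim: s x b => [|a t IH] x b /=; first by rewrite alt_psum0 mulr0 addr0 andbT.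
rewrite IH alt_psum_cons.
have shift p : x + sgb b * a%:Z + sgb (~~ b) * p = x + sgb b * (a%:Z - p).
  by case: b => /=; ring.
rewrite shift (iotaDl 1 1) all_map alt_psum_cons alt_psum0 subr0.
under [all _ (iota 1 _)]eq_all do rewrite shift.
under [all (preim _ _) _]eq_all do rewrite /= add1n alt_psum_cons.
by rewrite -!andbA; case: (`|x + sgb b * a%:Z| <= d%:Z); rewrite /= ?andbF.
Qed.

Lemma odd_sub_even_pos_sum s :
  (odd_pos_sum s)%:Z - (even_pos_sum s)%:Z = alt_psum s (size s).
Proof.
rewrite /alt_psum /odd_pos_sum /even_pos_sum [RHS](bigID (fun i : 'I__ => odd i)) /=.
rewrite addrC -!natz !natr_sum -sumrN; congr (_ + _); apply: eq_bigr => i i_parity.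
  by rewrite -signr_odd (negbTE i_parity) expr0 mul1r natz.
by rewrite -signr_odd i_parity expr1 mulN1r natz.
Qed.

Lemma deviation_setE m d s :
  deviation_set m d s = (sumn s == m) && dev_walk d 0 true s.
Proof.
rewrite /deviation_set dev_walkE odd_sub_even_pos_sum /= add0r mul1r.
under [X in _ = _ && (_ && (_ && X))]eq_all do rewrite add0r mul1r.
by rewrite andbCA.
Qed.

Section CompositionCount.
Variable d : nat.

Definition in_band (x : int) : bool := `|x| <= d%:Z.

Definition dev_comp (x : int) (b : bool) (r : nat) (s : seq nat) : bool :=
  (sumn s == r) && dev_walk d x b s.

Definition ncomp_len (k n : nat) (x : int) (b : bool) (r : nat) : nat :=
  count (dev_comp x b r) (seqs_of k n).

Lemma ncomp_len0 n x b r : ncomp_len 0 n x b r = (r == 0)%N && (`|x| <= 1).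
Proof. by rewrite /ncomp_len /= /dev_comp /= addn0 eq_sym. Qed.

Lemma ncomp_lenS k n x b r :
  ncomp_len k.+1 n x b r = (\sum_(a <- iota 1 n)
     if [&& (0 < a)%N, (a <= r)%N & in_band (x + sgb b * a%:Z)]
     then ncomp_len k n (x + sgb b * a%:Z) (~~ b) (r - a) else 0)%N.
Proof.
rewrite /ncomp_len /= count_flatten sumnE !big_map; apply: eq_bigr => a _.
rewrite count_map /preim /dev_comp /=.
case: (posnP a) => [-> | a_gt0].
  by rewrite (eq_count (a2 := pred0)) ?count_pred0 // => t /=; rewrite !andbF.
case: (leqP a r) => [a_le_r | r_lt_a] /=; last first.
  rewrite (eq_count (a2 := pred0)) ?count_pred0 // => t /=.
  by apply/negbTE/andP => -[/eqP sum_r _]; move: r_lt_a; rewrite -sum_r; lia.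
rewrite /in_band; case: (`|_| <= d%:Z); last first.
  by rewrite (eq_count (a2 := pred0)) ?count_pred0 // => t /=; rewrite andbF.
apply: eq_count => t /=; congr (_ && _).
by apply/eqP/eqP => [<-|->]; [rewrite addKn | rewrite subnKC].
Qed.

Definition ncomp_upto (K n : nat) (x : int) (b : bool) (r : nat) : nat :=
  \sum_(k < K.+1) ncomp_len k n x b r.

Definition ncomp (r : nat) (x : int) (b : bool) : nat := ncomp_upto r r x b r.

(* A composition of [r] has at most [r] parts, each at most [r], so enlarging the
   bounds [K] and [n] does not change the count. *)
Lemma ncomp_uptoE r K n x b : (r <= K)%N -> (r <= n)%N ->
  ncomp_upto K n x b r = ((r == 0)%N && (`|x| <= 1) + \sum_(a <- iota 1 r)
     if in_band (x + sgb b * a%:Z) then ncomp (r - a) (x + sgb b * a%:Z) (~~ b) else 0)%N.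
Proof.
elim/ltn_ind: r K n x b => r IH K n x b r_le_K r_le_n.
rewrite /ncomp_upto big_ord_recl ncomp_len0; congr (_ + _)%N.
case: K r_le_K => [|K] r_le_K.
  have -> : r = 0%N by lia.
  by rewrite big_ord0 big_nil.
rewrite (eq_bigr (fun i : 'I_K.+1 => ncomp_len i.+1 n x b r)) => [|i _]; last by rewrite lift0.
under eq_bigr do rewrite ncomp_lenS.
rewrite exchange_big /= -(subnKC r_le_n) iotaD big_cat /=.
rewrite [X in (_ + X)%N]big1_seq ?addn0; last first.
  move=> a /andP [_]; rewrite mem_iota => /andP [a_gt_r _].
  have -> : (a <= r)%N = false by lia.
  by rewrite andbF big1.
rewrite !big_seq; apply: eq_bigr => a; rewrite mem_iota => /andP [a_gt0 a_le_r].
rewrite a_gt0 (_ : (a <= r)%N) /=; last by lia.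
case: (in_band _); last by rewrite big1.
rewrite /ncomp subnKC //.
by rewrite -[LHS]/(ncomp_upto K n _ _ _) !(IH (r - a)%N) //; lia.
Qed.

Lemma ncomp0 x b : ncomp 0 x b = (`|x| <= 1) :> nat.
Proof. by rewrite /ncomp ncomp_uptoE //= big_nil addn0. Qed.

Definition band_walks (n : nat) (y : int) : nat :=
  if n is 0 then `|y| <= 1 else (ncomp n y true + ncomp n y false)%N.

(* Peeling one unit off the first part either empties it (the next part starts,
   in the opposite direction) or leaves a shorter first part in the same direction. *)
Lemma ncompS r x b : in_band x ->
  ncomp r.+1 x b = if in_band (x + sgb b) then band_walks r (x + sgb b) else 0%N.
Proof.
move=> x_in.
rewrite {1}/ncomp ncomp_uptoE //= add0n big_cons subn1 /= mulr1 (iotaDl 1 1) big_map.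
have step (a : nat) : x + sgb b * (1 + a)%N%:Z = x + sgb b + sgb b * a%:Z.
  by rewrite PoszD mulrDr mulr1 addrA.
under eq_bigr do rewrite step subnDA subn1 /=.
clear step.
case: ifP => [_ | y_out]; last first.
  rewrite big1_seq // => a /andP [_]; rewrite mem_iota => /andP [a_gt0 _].
  suff -> : in_band (x + sgb b + sgb b * a%:Z) = false by [].
  by move: x_in y_out; rewrite /in_band; case: b => /=; lia.
case: r => [|r]; first by rewrite big_nil ncomp0 addn0; case: b.
have -> : band_walks r.+1 (x + sgb b)
          = (ncomp r.+1 (x + sgb b) (~~ b) + ncomp r.+1 (x + sgb b) b)%N.
  by case: b; rewrite // addnC.
by rewrite [ncomp r.+1 _ b]/ncomp ncomp_uptoE //= add0n.
Qed.

Lemma band_walksS n y : in_band y -> band_walks n.+1 y =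
  ((if in_band (y + 1) then band_walks n (y + 1) else 0)
   + (if in_band (y - 1) then band_walks n (y - 1) else 0))%N.
Proof. by move=> y_in; rewrite /band_walks !ncompS. Qed.

End CompositionCount.

Lemma zeta_ncomp m d : zeta m d = ncomp d m 0 true.
Proof.
rewrite /zeta /candidates count_flatten sumnE big_map /ncomp /ncomp_upto.
rewrite -(big_mkord xpredT (fun k => ncomp_len d k m 0 true m)) /index_iota subn0 big_map.
by apply: eq_bigr => k _; apply: eq_count => s; rewrite deviation_setE.
Qed.

(* [walks d n i] counts the walks of [n] unit steps on {0, ..., 2d} that start
   at [i] and end in {d-1, d, d+1}; vertex [i] stands for the position [i - d]. *)
Fixpoint walks (d n i : nat) : nat :=
  if n is n'.+1 then
    ((if (i < d + d)%N then walks d n' i.+1 else 0)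
     + (if (0 < i)%N then walks d n' i.-1 else 0))%N
  else (i <= d.+1)%N && (d <= i.+1)%N.

Lemma band_walks_walks d n i :
  (i <= d + d)%N -> band_walks d n (i%:Z - d%:Z) = walks d n i.
Proof.
elim: n i => [|n IH] i i_le.
  by rewrite /=; congr nat_of_bool; apply/idP/idP; lia.
rewrite band_walksS /in_band /=; last by lia.
congr (_ + _)%N.
  have -> : (`|i%:Z - d%:Z + 1| <= d%:Z) = (i < d + d)%N by apply/idP/idP; lia.
  case: ltnP => // i_lt; rewrite -IH //.
  by congr band_walks; lia.
have -> : (`|i%:Z - d%:Z - 1| <= d%:Z) = (0 < i)%N by apply/idP/idP; lia.
case: ltnP => // i_gt0; rewrite -IH; last by lia.
by congr band_walks; lia.
Qed.

Lemma zeta_walks d n : (0 < d)%N -> zeta n.+1 d = walks d n d.+1.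
Proof.
move=> d_gt0; rewrite zeta_ncomp ncompS /in_band ?normr0 // add0r /=.
have -> : `|1 : int| <= d%:Z by lia.
rewrite -band_walks_walks; last by lia.
by congr band_walks; lia.
Qed.

Lemma walks_sym d n i : (i <= d + d)%N -> walks d n i = walks d n (d + d - i).
Proof.
elim: n i => [|n IH] i i_le /=.
  by congr nat_of_bool; apply/idP/idP; lia.
rewrite addnC; congr (_ + _)%N.
  have -> : (0 < i)%N = (d + d - i < d + d)%N by apply/idP/idP; lia.
  case: ifP => // i_gt0; rewrite IH; last by lia.
  by congr walks; lia.
have -> : (i < d + d)%N = (0 < d + d - i)%N by apply/idP/idP; lia.
case: ifP => // i_lt; rewrite IH; last by lia.
by congr walks; lia.
Qed.

Lemma walks_symE d n i j : (i + j == d + d)%N -> walks d n i = walks d n j.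
Proof. by move=> /eqP ij; rewrite walks_sym; [congr walks | ]; lia. Qed.

Lemma walks1_rec n : walks 1 n.+2 2 = (2 * walks 1 n 2)%N.
Proof. by rewrite /= (walks_symE 1 n 0 2 erefl); lia. Qed.

Lemma walks2_rec n : walks 2 n.+2 3 = (3 * walks 2 n 3)%N.
Proof. by rewrite /= (walks_symE 2 n 1 3 erefl); lia. Qed.

Lemma walks3_rec n : (walks 3 n.+4 4 + 2 * walks 3 n 4 = 4 * walks 3 n.+2 4)%N.
Proof. by rewrite /= (walks_symE 3 n 6 0 erefl) (walks_symE 3 n 4 2 erefl); lia. Qed.

Lemma walks4_rec n : (walks 4 n.+4 5 + 5 * walks 4 n 5 = 5 * walks 4 n.+2 5)%N.
Proof. by rewrite /= (walks_symE 4 n 7 1 erefl) (walks_symE 4 n 5 3 erefl); lia. Qed.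

Lemma walks5_rec n :
  (walks 5 n.+2.+4 6 + 9 * walks 5 n.+2 6 = 6 * walks 5 n.+4 6 + 2 * walks 5 n 6)%N.
Proof.
rewrite /= (walks_symE 5 n 10 0 erefl) (walks_symE 5 n 8 2 erefl).
by rewrite (walks_symE 5 n 6 4 erefl); lia.
Qed.

Lemma walks_geometric d c n :
  (forall n, walks d n.+2 d.+1 = c * walks d n d.+1)%N ->
  walks d 0 d.+1 = 1%N -> walks d 1 d.+1 = 1%N -> walks d n d.+1 = (c ^ n./2)%N.
Proof.
move=> rec w0 w1; elim/ltn_ind: n => -[|[|n]] IH //.
by rewrite rec IH // expnS.
Qed.

Section InterleavedRecurrences.
Context {R : comRingType}.

Lemma rec2_half_solution (f g : nat -> R) p q :
  (forall n, f n.+4 = p * f n.+2 - q * f n) ->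
  (forall k, g k.+2 = p * g k.+1 - q * g k) ->
  f 0%N = g 1%N -> f 1%N = g 1%N -> f 2%N = g 2%N -> f 3%N = g 2%N ->
  forall n, f n = g (n./2).+1.
Proof.
move=> frec grec f0 f1 f2 f3; elim/ltn_ind => -[|[|[|[|n]]]] IH //.
rewrite frec !IH; try lia.
by rewrite -[n.+4./2]/(n./2).+2 -[n.+2./2]/(n./2).+1 -grec.
Qed.

Lemma rec3_half_solution (f g : nat -> R) p q r :
  (forall n, f n.+2.+4 = p * f n.+4 - q * f n.+2 + r * f n) ->
  (forall k, g k.+3 = p * g k.+2 - q * g k.+1 + r * g k) ->
  f 0%N = g 1%N -> f 1%N = g 1%N -> f 2%N = g 2%N -> f 3%N = g 2%N ->
  f 4%N = g 3%N -> f 5%N = g 3%N ->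
  forall n, f n = g (n./2).+1.
Proof.
move=> frec grec f0 f1 f2 f3 f4 f5; elim/ltn_ind => -[|[|[|[|[|[|n]]]]]] IH //.
rewrite frec !IH; try lia.
rewrite -[n.+2.+4./2]/(n./2).+3 -[n.+4./2]/(n./2).+2.
by rewrite -[n.+2./2]/(n./2).+1 -grec.
Qed.

Lemma char2_root_expr (u p q : R) : u * u = p * u - q ->
  forall k, u ^+ k.+2 = p * u ^+ k.+1 - q * u ^+ k.
Proof. by move=> u_root k; rewrite !exprS mulrA u_root; ring. Qed.

Lemma char3_root_expr (u p q r : R) : u * u * u = p * (u * u) - q * u + r ->
  forall k, u ^+ k.+3 = p * u ^+ k.+2 - q * u ^+ k.+1 + r * u ^+ k.
Proof. by move=> u_root k; rewrite !exprS !mulrA u_root; ring. Qed.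

End InterleavedRecurrences.

Section ClosedForms.
Variable R : rcfType.

Lemma walks3_closed n : (walks 3 n 4)%:R =
  ((2 + Num.sqrt 2) ^+ (n./2).+1 + (2 - Num.sqrt 2) ^+ (n./2).+1) / 4 :> R.
Proof.
have s2 : Num.sqrt 2 ^+ 2 = 2 :> R by rewrite sqr_sqrtr.
apply: (rec2_half_solution (fun n => (walks 3 n 4)%:R)
  (fun k => ((2 + Num.sqrt 2) ^+ k + (2 - Num.sqrt 2) ^+ k) / 4) 4 2) => [k | k ||||].
- have rec : (walks 3 k.+4 4)%:R + 2 * (walks 3 k 4)%:R = 4 * (walks 3 k.+2 4)%:R :> R.
    by rewrite -!natrM -natrD walks3_rec.
  lra.
- rewrite (char2_root_expr (2 + Num.sqrt 2) 4 2); last by nra.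
  by rewrite (char2_root_expr (2 - Num.sqrt 2) 4 2); [lra | nra].
all: by rewrite /= ?expr1 ?expr2; nra.
Qed.

Lemma walks4_closed n : (walks 4 n 5)%:R =
  (((5 + Num.sqrt 5) / 2) ^+ (n./2).+1 + ((5 - Num.sqrt 5) / 2) ^+ (n./2).+1) / 5 :> R.
Proof.
have s5 : Num.sqrt 5 ^+ 2 = 5 :> R by rewrite sqr_sqrtr.
apply: (rec2_half_solution (fun n => (walks 4 n 5)%:R)
  (fun k => (((5 + Num.sqrt 5) / 2) ^+ k + ((5 - Num.sqrt 5) / 2) ^+ k) / 5) 5 5)
  => [k | k ||||].
- have rec : (walks 4 k.+4 5)%:R + 5 * (walks 4 k 5)%:R = 5 * (walks 4 k.+2 5)%:R :> R.
    by rewrite -!natrM -natrD walks4_rec.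
  lra.
- rewrite (char2_root_expr ((5 + Num.sqrt 5) / 2) 5 5); last by nra.
  by rewrite (char2_root_expr ((5 - Num.sqrt 5) / 2) 5 5); [lra | nra].
all: by rewrite /= ?expr1 ?expr2; nra.
Qed.

Lemma walks5_closed n : (walks 5 n 6)%:R =
  ((2 + Num.sqrt 3) ^+ (n./2).+1 + (2 - Num.sqrt 3) ^+ (n./2).+1 + 2 ^+ (n./2).+1) / 6 :> R.
Proof.
have s3 : Num.sqrt 3 ^+ 2 = 3 :> R by rewrite sqr_sqrtr.
apply: (rec3_half_solution (fun n => (walks 5 n 6)%:R)
  (fun k => ((2 + Num.sqrt 3) ^+ k + (2 - Num.sqrt 3) ^+ k + 2 ^+ k) / 6) 6 9 2)
  => [k | k ||||||].
- have rec : (walks 5 k.+2.+4 6)%:R + 9 * (walks 5 k.+2 6)%:R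
              = 6 * (walks 5 k.+4 6)%:R + 2 * (walks 5 k 6)%:R :> R.
    by rewrite -!natrM -!natrD walks5_rec.
  lra.
- (* X^3 - 6X^2 + 9X - 2 = (X - 2) (X^2 - 4X + 1) *)
  have cubic_root (u : R) : u * u = 4 * u - 1 -> u * u * u = 6 * (u * u) - 9 * u + 2.
    by move=> uu; rewrite uu mulrBl -mulrA uu; ring.
  rewrite (char3_root_expr (2 + Num.sqrt 3) 6 9 2); last by apply: cubic_root; nra.
  rewrite (char3_root_expr (2 - Num.sqrt 3) 6 9 2); last by apply: cubic_root; nra.
  by rewrite (char3_root_expr 2 6 9 2); lra.
all: by rewrite /= ?expr1 ?expr2 ?exprS ?expr0 ?mulr1; nra.
Qed.

End ClosedForms.

Theorem lemma2 (R : rcfType) (m : nat) (hm : (0 < m)%N) :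
  [/\ (zeta m 1 = 2 ^ ((m - 1) %/ 2))%N,
      (zeta m 2 = 3 ^ ((m - 1) %/ 2))%N,
      ((zeta m 3)%:R : R) =
        ((2 + Num.sqrt 2) ^+ ((m + 1) %/ 2)%N + (2 - Num.sqrt 2) ^+ ((m + 1) %/ 2)%N) / 4,
      ((zeta m 4)%:R : R) =
        (((5 + Num.sqrt 5) / 2) ^+ ((m + 1) %/ 2)%N
         + ((5 - Num.sqrt 5) / 2) ^+ ((m + 1) %/ 2)%N) / 5
    & ((zeta m 5)%:R : R) =
        ((2 + Num.sqrt 3) ^+ ((m + 1) %/ 2)%N + (2 - Num.sqrt 3) ^+ ((m + 1) %/ 2)%N
         + 2 ^+ ((m + 1) %/ 2)%N) / 6].
Proof.
case: m hm => // n _.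
rewrite !zeta_walks // subn1 addn1 !divn2 -[n.+2./2]/(n./2).+1.
split.
- by apply: walks_geometric => // k; exact: walks1_rec.
- by apply: walks_geometric => // k; exact: walks2_rec.
- exact: walks3_closed.
- exact: walks4_closed.
- exact: walks5_closed.
Qed.
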